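(* For every $n\geq 3$, the dihedral group $D_n\leq\mathrm{Sym}(n)$ (the group of rotations and reflections of a regular $n$-gon, acting on its $n$ vertices) has the strict EKR property.
   Context: For $G\leq \mathrm{Sym}(n)$: two permutations $\pi,\tau\in G$ intersect if $\pi\tau^{-1}$ has a fixed point in $\{1,\dots,n\}$. A subset of $G$ is intersecting if every pair of its elements intersect. $G$ has the EKR property if every intersecting subset of $G$ has size at most the size of the largest point-stabilizer in $G$. $G$ has the strict EKR property if it has the EKR property and the only intersecting subsets of maximum size in $G$ are the cosets of the point-stabilizers. *)

From mathcomp Require Import all_boot all_order all_fingroup.
Set Implicit Arguments. Unset Strict Implicit. Unset Printing Implicit Defensive.

Local Open Scope group_scope.

(* Permutation groups are subsets of {perm T} for a finite type T;
   Sym(n) is {perm 'I_n}, acting on {0,...,n-1}. *)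

Definition perm_intersect (T : finType) (p q : {perm T}) : bool :=
  [exists x : T, (p * q^-1) x == x].

Definition intersecting (T : finType) (S : {set {perm T}}) : Prop :=
  forall p q, p \in S -> q \in S -> perm_intersect p q.

Definition stab (T : finType) (G : {set {perm T}}) (x : T) : {set {perm T}} :=
  [set g in G | g x == x].

Definition max_stab (T : finType) (G : {set {perm T}}) : nat :=
  \max_(x : T) #|stab G x|.

Definition EKR (T : finType) (G : {set {perm T}}) : Prop :=
  forall S : {set {perm T}}, S \subset G -> intersecting S -> #|S| <= max_stab G.

Definition stab_coset (T : finType) (G : {set {perm T}}) (S : {set {perm T}}) : Prop :=
  exists x : T, exists2 g, g \in G & (S = g *: stab G x \/ S = stab G x :* g).

Definition strict_EKR (T : finType) (G : {set {perm T}}) : Prop :=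
  EKR G /\
  forall S : {set {perm T}}, S \subset G -> intersecting S -> #|S| = max_stab G ->
    stab_coset G S.

Definition dihedral (n : nat) : {set {perm 'I_n}} :=
  [set p : {perm 'I_n} | [exists k : 'I_n,
     [forall i : 'I_n, val (p i) == (k + i) %% n] ||
     [forall i : 'I_n, val (p i) == (k + (n - i)) %% n]]].

From mathcomp Require Import all_boot all_order all_fingroup.
From mathcomp Require Import all_algebra ring.
Set Implicit Arguments. Unset Strict Implicit. Unset Printing Implicit Defensive.
Import GRing.Theory.
Local Open Scope group_scope.

(* Identify the vertices with Z/nZ: every element of D_n is a rotation
   i |-> k + i or a reflection i |-> k - i, and two elements of the same kind
   that agree at one vertex are equal. Hence an intersecting subset of D_n
   contains at most one rotation and one reflection, while the stabilizer of 0
   is {id, -id}; so the EKR bound is 2, and an extremal pair {p, q} with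
   p x = q x is the right coset G_x p. *)

Lemma perm_intersectP (T : finType) (p q : {perm T}) :
  reflect (exists x, p x = q x) (perm_intersect p q).
Proof.
apply: (iffP existsP) => -[x e]; exists x.
- by rewrite -{2}(eqP e) permM permKV.
- by rewrite permM e permK.
Qed.

Lemma intersecting_stab (T : finType) (G : {set {perm T}}) x :
  intersecting (stab G x).
Proof.
move=> p q; rewrite !inE => /andP[_ /eqP px] /andP[_ /eqP qx].
by apply/perm_intersectP; exists x; rewrite px qx.
Qed.

Lemma stab_sub (T : finType) (G : {set {perm T}}) x : stab G x \subset G.
Proof. by apply/subsetP => g; rewrite inE => /andP[]. Qed.

Lemma mem_rcoset_stab (T : finType) (G : {set {perm T}}) (g p : {perm T}) x :
  g * p^-1 \in G -> g x = p x -> g \in stab G x :* p.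
Proof. by move=> gpG gpx; rewrite mem_rcoset inE gpG permM gpx permK eqxx. Qed.

Section Dihedral.

Variable m : nat.
Local Notation T := 'I_m.+3.
Local Notation D := (dihedral m.+3).

Lemma dihedralP (p : {perm T}) :
  reflect (exists k : T, (forall i, p i = k + i)%R \/ (forall i, p i = k - i)%R)
          (p \in D).
Proof.
rewrite inE; apply: (iffP existsP) => -[k hk]; exists k.
- case/orP: hk => /forallP h; [left | right] => i; apply/val_inj.
  + by rewrite (eqP (h i)).
  + by rewrite (eqP (h i)) /= modnDmr.
- apply/orP; case: hk => h; [left | right]; apply/forallP => i; rewrite h //=.
  by rewrite modnDmr.
Qed.

Lemma one_neq_opp1 : (1%R : T) != (- 1)%R.
Proof. by rewrite -val_eqE /= !modn_small. Qed.

Lemma rotation_neq_reflection (p : {perm T}) a b :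
  (forall i, p i = a + i)%R -> ~ (forall i, p i = b - i)%R.
Proof.
move=> rot refl; have ab : a = b by have := rot 0%R; rewrite refl addr0 subr0.
have := rot 1%R; rewrite refl ab => /addrI e.
by move: one_neq_opp1; rewrite e eqxx.
Qed.

Definition is_rotation (p : {perm T}) := [exists k : T, [forall i, p i == (k + i)%R]].

Lemma is_rotation_rot (p : {perm T}) k :
  (forall i, p i = k + i)%R -> is_rotation p.
Proof. by move=> rot; apply/existsP; exists k; apply/forallP => i; rewrite rot. Qed.

Lemma refl_not_rotation (p : {perm T}) k :
  (forall i, p i = k - i)%R -> ~~ is_rotation p.
Proof.
move=> refl; apply/existsP => -[c /forallP rot].
exact: rotation_neq_reflection (fun i => eqP (rot i)) refl.
Qed.

Lemma dihedral_agree_eq (p q : {perm T}) x : p \in D -> q \in D ->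
  p x = q x -> is_rotation p = is_rotation q -> p = q.
Proof.
move=> /dihedralP[a pa] /dihedralP[b qb] pqx.
case: pa => pa; case: qb => qb.
- move: pqx; rewrite pa qb => /addIr ab _.
  by apply/permP => i; rewrite pa qb ab.
- by rewrite (is_rotation_rot pa) (negbTE (refl_not_rotation qb)).
- by rewrite (is_rotation_rot qb) (negbTE (refl_not_rotation pa)).
- move: pqx; rewrite pa qb => /addIr ab _.
  by apply/permP => i; rewrite pa qb ab.
Qed.

Lemma card_intersecting_dihedral (A : {set {perm T}}) :
  A \subset D -> intersecting A -> #|A| <= 2.
Proof.
move=> sAD iA.
have inj : {in A &, injective is_rotation}.
  move=> p q pA qA; have /perm_intersectP[x pqx] := iA p q pA qA.
  exact: dihedral_agree_eq (subsetP sAD p pA) (subsetP sAD q qA) pqx.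
by rewrite -(card_in_imset inj) -card_bool max_card.
Qed.

Lemma dihedral_mulV (g p : {perm T}) : g \in D -> p \in D -> g * p^-1 \in D.
Proof.
have invrot b (p' : {perm T}) : (forall i, p' i = b + i)%R ->
    forall j, p'^-1 j = (j - b)%R.
  by move=> rot j; rewrite -{1}(_ : p' (j - b)%R = j) ?permK // rot; ring.
have invrefl b (p' : {perm T}) : (forall i, p' i = b - i)%R ->
    forall j, p'^-1 j = (b - j)%R.
  by move=> refl j; rewrite -{1}(_ : p' (b - j)%R = j) ?permK // refl; ring.
move=> /dihedralP[a [] ga] /dihedralP[b [] pb]; apply/dihedralP.
- by exists (a - b)%R; left => i; rewrite permM ga (invrot _ _ pb); ring.
- by exists (b - a)%R; right => i; rewrite permM ga (invrefl _ _ pb); ring.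
- by exists (a - b)%R; right => i; rewrite permM ga (invrot _ _ pb); ring.
- by exists (b - a)%R; left => i; rewrite permM ga (invrefl _ _ pb); ring.
Qed.

Lemma stab0_dihedral : [set 1; perm (@oppr_inj T)] \subset stab D 0%R.
Proof.
apply/subsetP => g /set2P[] ->; rewrite /stab in_set ?perm1 ?permE ?oppr0 eqxx andbT.
- by apply/dihedralP; exists 0%R; left => i; rewrite perm1 add0r.
- by apply/dihedralP; exists 0%R; right => i; rewrite permE sub0r.
Qed.

Lemma max_stab_dihedral : max_stab D = 2.
Proof.
apply/eqP; rewrite eqn_leq; apply/andP; split.
  apply/bigmax_leqP => x _.
  by apply: card_intersecting_dihedral; [exact: stab_sub | exact: intersecting_stab].
apply: leq_trans (leq_bigmax (0%R : T)); apply: leq_trans (subset_leq_card stab0_dihedral).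
rewrite cards2 eq_sym; case: eqP => // /permP /(_ 1%R).
by rewrite permE perm1 => e; move: one_neq_opp1; rewrite e eqxx.
Qed.

End Dihedral.

Theorem proposition6 (n : nat) : 3 <= n -> strict_EKR (dihedral n).
Proof.
case: n => [|[|[|m]]] // _.
have ekr : EKR (dihedral m.+3).
  by move=> S sSD iS; rewrite max_stab_dihedral; apply: card_intersecting_dihedral.
split=> // S sSD iS; rewrite max_stab_dihedral => /eqP /cards2P[p [q [pq eS]]].
have pS : p \in S by rewrite eS !inE eqxx.
have qS : q \in S by rewrite eS !inE eqxx orbT.
have pD := subsetP sSD p pS.
have /perm_intersectP[x pqx] := iS p q pS qS.
exists x; exists p => //; right; apply/eqP; rewrite eqEcard; apply/andP; split.
  apply/subsetP => g gS; apply: mem_rcoset_stab.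
    exact: dihedral_mulV (subsetP sSD g gS) pD.
  by move: gS; rewrite eS !inE => /orP[] /eqP ->.
rewrite card_rcoset eS cards2 pq.
by apply: card_intersecting_dihedral; [exact: stab_sub | exact: intersecting_stab].
Qed.
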